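(* Let $\Omega\subseteq\mathbb{R}^2$ be open and let $f=(\phi_1,\phi_2):\Omega\to\mathbb{R}^2$ be a smooth plane transformation. For a nondegenerate triangle with vertices $a,b,c\in\mathbb{R}^2$, let $a'$ denote the mirror vertex of $a$, i.e. the reflection of $a$ across the line through $b$ and $c$. Then for every $x\in\Omega$, $$\lim \frac{\det\big(f(a')-f(a),\; f(c)-f(b)\big)}{2\det\big(b-a,\; c-b\big)} \;=\; \det Df(x)=\partial_1\phi_1(x)\,\partial_2\phi_2(x)-\partial_2\phi_1(x)\,\partial_1\phi_2(x),$$ where the limit is taken as $(a,b,c)\to(x,x,x)$ in $\mathbb{R}^2\times\mathbb{R}^2\times\mathbb{R}^2$, over triples $(a,b,c)$ such that the triangle $a,b,c$ is nondegenerate (i.e. $\det(b-a,c-b)\neq 0$) and the mirror vertex $a'$ is balanced (and $a,b,c,a'\in\Omega$, which holds automatically for such triples close enough to $x$).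
   Context: $\det(u,v)$ denotes the determinant of the $2\times 2$ matrix with rows $u,v\in\mathbb{R}^2$; equivalently $\det(b-a,c-b)=(a\wedge b+b\wedge c+c\wedge a)\cdot\mathbb{I}_2$ in the Clifford algebra of $\mathbb{R}^2$. A real function $\psi:\Omega\to\mathbb{R}$ on an open set $\Omega\subseteq\mathbb{R}^2$ is called smooth if it is $C^2$ on $\Omega$ and $\sup_{x\in\Omega}\max\{|\lambda_1(x)|,|\lambda_2(x)|\}<\infty$, where $\lambda_1(x),\lambda_2(x)$ are the eigenvalues of the Hessian matrix of $\psi$ at $x$. A transformation $f:\Omega\to\mathbb{R}^2$ is smooth if both components $\phi_1,\phi_2$ are smooth functions. For a nondegenerate triangle with vertices $a,b,c$, the mirror vertex of $a$ is $a'=-\big[a+2b\frac{(a-c)\cdot(c-b)}{|c-b|^2}+2c\frac{(b-a)\cdot(c-b)}{|c-b|^2}\big]$, the reflection of $a$ across the line through $b,c$. The mirror vertex $a'$ is called balanced if the point $\bar a=\frac12(a+a')$ (the foot of the perpendicular from $a$ to the line $bc$) lies in the closed segment $[b,c]$. *)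

From Stdlib Require Import Reals.
From Coquelicot Require Import Coquelicot.
Open Scope R_scope.

Definition padd (u v : R * R) : R * R := (fst u + fst v, snd u + snd v).
Definition psub (u v : R * R) : R * R := (fst u - fst v, snd u - snd v).
Definition pscal (k : R) (u : R * R) : R * R := (k * fst u, k * snd u).
Definition dot (u v : R * R) : R := fst u * fst v + snd u * snd v.
Definition norm2 (u : R * R) : R := dot u u.
Definition pdist (u v : R * R) : R := sqrt (norm2 (psub u v)).

Definition det2 (u v : R * R) : R := fst u * snd v - snd u * fst v.

Definition d1 (psi : R * R -> R) (x : R * R) : R :=
  Derive (fun t => psi (t, snd x)) (fst x).
Definition d2 (psi : R * R -> R) (x : R * R) : R :=
  Derive (fun t => psi (fst x, t)) (snd x).

Definition has_partials_on (Omega : R * R -> Prop) (psi : R * R -> R) : Prop :=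
  forall x, Omega x ->
    ex_derive (fun t => psi (t, snd x)) (fst x) /\
    ex_derive (fun t => psi (fst x, t)) (snd x).

Definition C1_on (Omega : R * R -> Prop) (psi : R * R -> R) : Prop :=
  has_partials_on Omega psi /\
  (forall x, Omega x -> continuous psi x /\ continuous (d1 psi) x /\ continuous (d2 psi) x).

Definition C2_on (Omega : R * R -> Prop) (psi : R * R -> R) : Prop :=
  C1_on Omega psi /\ C1_on Omega (d1 psi) /\ C1_on Omega (d2 psi).

Definition hess11 psi x := d1 (d1 psi) x.
Definition hess12 psi x := d2 (d1 psi) x.
Definition hess21 psi x := d1 (d2 psi) x.
Definition hess22 psi x := d2 (d2 psi) x.

Definition is_eigenvalue2 (m11 m12 m21 m22 lam : R) : Prop :=
  exists v1 v2 : R, (v1 <> 0 \/ v2 <> 0) /\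
    m11 * v1 + m12 * v2 = lam * v1 /\ m21 * v1 + m22 * v2 = lam * v2.

Definition smooth_fun (Omega : R * R -> Prop) (psi : R * R -> R) : Prop :=
  C2_on Omega psi /\
  exists M : R, forall x lam, Omega x ->
    is_eigenvalue2 (hess11 psi x) (hess12 psi x) (hess21 psi x) (hess22 psi x) lam ->
    Rabs lam <= M.

Definition smooth_map (Omega : R * R -> Prop) (f : R * R -> R * R) : Prop :=
  smooth_fun Omega (fun x => fst (f x)) /\ smooth_fun Omega (fun x => snd (f x)).

Definition jac_det (f : R * R -> R * R) (x : R * R) : R :=
  let phi1 := fun y => fst (f y) in
  let phi2 := fun y => snd (f y) in
  d1 phi1 x * d2 phi2 x - d2 phi1 x * d1 phi2 x.

Definition mirror (a b c : R * R) : R * R :=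
  pscal (-1)
    (padd a
      (padd (pscal (2 * dot (psub a c) (psub c b) / norm2 (psub c b)) b)
            (pscal (2 * dot (psub b a) (psub c b) / norm2 (psub c b)) c))).

Definition nondegenerate (a b c : R * R) : Prop := det2 (psub b a) (psub c b) <> 0.

Definition balanced (a b c : R * R) : Prop :=
  exists t : R, 0 <= t <= 1 /\
    pscal (1/2) (padd a (mirror a b c)) = padd (pscal (1 - t) b) (pscal t c).

Definition mirror_ratio (f : R * R -> R * R) (a b c : R * R) : R :=
  det2 (psub (f (mirror a b c)) (f a)) (psub (f c) (f b))
  / (2 * det2 (psub b a) (psub c b)).

(* The mean value theorem along coordinate legs writes f(q) - f(p) = P (q - p) with the
   rows of P within eta of the gradients of phi1, phi2 at x, for p, q near x.  With
   u = a' - a and v = c - b we have u ⊥ v and det(u, v) = 2 det(b - a, c - b), so the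
   ratio is det(P u, Q v) / det(u, v).  For P = Q = Df(x) this is exactly det Df(x); the
   perturbation costs O(eta |u|_1 |v|_1), and orthogonality gives
   |u|_1 |v|_1 <= 2 |det(u, v)|, so the ratio is within O(eta) of det Df(x). *)

From Pilot Require Import Defs.
From Stdlib Require Import Reals Lra Psatz.
From Coquelicot Require Import Coquelicot.
Open Scope R_scope.

Definition supnorm (u : R * R) : R := Rmax (Rabs (fst u)) (Rabs (snd u)).
Definition l1norm (u : R * R) : R := Rabs (fst u) + Rabs (snd u).

Definition lin (p q u : R * R) : R * R := (dot p u, dot q u).

Definition grad (psi : R * R -> R) (x : R * R) : R * R := (Defs.d1 psi x, Defs.d2 psi x).

Definition reject (w v : R * R) : R * R :=
  psub w (pscal (dot w v / norm2 v) v).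

Lemma supnorm_ge0 (u : R * R) : 0 <= supnorm u.
Proof. eapply Rle_trans; [apply Rabs_pos | apply Rmax_l]. Qed.

Lemma Rabs_fst_le_supnorm (u : R * R) : Rabs (fst u) <= supnorm u.
Proof. apply Rmax_l. Qed.

Lemma Rabs_snd_le_supnorm (u : R * R) : Rabs (snd u) <= supnorm u.
Proof. apply Rmax_r. Qed.

Lemma supnorm_le (u : R * R) (M : R) :
  Rabs (fst u) <= M -> Rabs (snd u) <= M -> supnorm u <= M.
Proof. now apply Rmax_lub. Qed.

Lemma ball_supnorm (x y : R * R) (r : R) : ball x r y <-> supnorm (psub y x) < r.
Proof. unfold supnorm; rewrite Rmax_Rlt; reflexivity. Qed.

Lemma supnorm_le_sqrt_norm2 (u : R * R) : supnorm u <= sqrt (norm2 u).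
Proof.
  destruct (sqrt_plus_sqr (fst u) (snd u)) as [H _].
  unfold supnorm, norm2, dot; now replace (fst u * fst u + snd u * snd u)
    with (fst u ^ 2 + snd u ^ 2) by ring.
Qed.

Lemma pdist_ball (a x : R * R) (d : R) : pdist a x < d -> ball x d a.
Proof.
  intro H; apply ball_supnorm; eapply Rle_lt_trans; [apply supnorm_le_sqrt_norm2 | exact H].
Qed.

Lemma supnorm_sqr_bounds (u : R * R) :
  supnorm u * supnorm u <= norm2 u <= 2 * (supnorm u * supnorm u).
Proof.
  pose proof (Rabs_fst_le_supnorm u); pose proof (Rabs_snd_le_supnorm u).
  pose proof (Rabs_pos (fst u)); pose proof (Rabs_pos (snd u)).
  pose proof (Rsqr_abs (fst u)); pose proof (Rsqr_abs (snd u)).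
  unfold norm2, dot, Rsqr in *.
  split; [|nra].
  unfold supnorm; destruct (Rle_dec (Rabs (fst u)) (Rabs (snd u))) as [Hle | Hlt].
  - rewrite Rmax_right by exact Hle; nra.
  - rewrite Rmax_left by lra; nra.
Qed.

Lemma l1norm_ge0 (u : R * R) : 0 <= l1norm u.
Proof. pose proof (Rabs_pos (fst u)); pose proof (Rabs_pos (snd u)); unfold l1norm; lra. Qed.

Lemma Rabs_dot_le (w u : R * R) : Rabs (dot w u) <= supnorm w * l1norm u.
Proof.
  pose proof (Rabs_fst_le_supnorm w); pose proof (Rabs_snd_le_supnorm w).
  pose proof (Rabs_pos (fst u)); pose proof (Rabs_pos (snd u)).
  unfold dot, l1norm; eapply Rle_trans; [apply Rabs_triang|].
  rewrite !Rabs_mult; nra.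
Qed.

Lemma Rabs_det2_le (u w : R * R) : Rabs (det2 u w) <= 2 * (supnorm u * supnorm w).
Proof.
  pose proof (Rabs_fst_le_supnorm u); pose proof (Rabs_snd_le_supnorm u).
  pose proof (Rabs_fst_le_supnorm w); pose proof (Rabs_snd_le_supnorm w).
  pose proof (Rabs_pos (fst u)); pose proof (Rabs_pos (snd u)).
  pose proof (Rabs_pos (fst w)); pose proof (Rabs_pos (snd w)).
  unfold det2; eapply Rle_trans; [apply Rabs_triang|].
  rewrite Rabs_Ropp, !Rabs_mult; nra.
Qed.

Lemma supnorm_lin_le (p q u : R * R) :
  supnorm (lin p q u) <= Rmax (supnorm p) (supnorm q) * l1norm u.
Proof.
  pose proof (l1norm_ge0 u) as Hu.
  apply supnorm_le; simpl; eapply Rle_trans; try apply Rabs_dot_le;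
    apply Rmult_le_compat_r; auto; [apply Rmax_l | apply Rmax_r].
Qed.

Lemma det2_lin (j1 j2 u v : R * R) :
  det2 (lin j1 j2 u) (lin j1 j2 v) = det2 j1 j2 * det2 u v.
Proof. unfold det2, lin, dot; simpl; ring. Qed.

Lemma lin_split (p q j1 j2 u : R * R) :
  lin p q u = padd (lin j1 j2 u) (lin (psub p j1) (psub q j2) u).
Proof. unfold lin, padd, psub, dot; simpl; f_equal; ring. Qed.

Lemma det2_perturb_le (X Y x y : R * R) (A B a b : R) :
  supnorm X <= A -> supnorm Y <= B -> supnorm x <= a -> supnorm y <= b ->
  Rabs (det2 (padd X x) (padd Y y) - det2 X Y) <= 2 * (A * b + a * B + a * b).
Proof.
  intros HX HY Hx Hy.
  pose proof (supnorm_ge0 X); pose proof (supnorm_ge0 Y).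
  pose proof (supnorm_ge0 x); pose proof (supnorm_ge0 y).
  replace (det2 (padd X x) (padd Y y) - det2 X Y)
    with (det2 X y + det2 x Y + det2 x y) by (unfold det2, padd; simpl; ring).
  pose proof (Rabs_det2_le X y); pose proof (Rabs_det2_le x Y); pose proof (Rabs_det2_le x y).
  eapply Rle_trans; [apply Rabs_triang|].
  eapply Rle_trans; [apply Rplus_le_compat_r, Rabs_triang|].
  nra.
Qed.

Lemma l1norm_sqr_le (u : R * R) : l1norm u * l1norm u <= 2 * norm2 u.
Proof.
  pose proof (Rsqr_abs (fst u)); pose proof (Rsqr_abs (snd u)).
  pose proof (Rle_0_sqr (Rabs (fst u) - Rabs (snd u))).
  unfold l1norm, norm2, dot, Rsqr in *; nra.
Qed.

(* For orthogonal [u], [v], Lagrange's identity gives [norm2 u * norm2 v = det2 u v ^ 2]. *)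
Lemma l1norm_mul_le_det2 (u v : R * R) :
  dot u v = 0 -> l1norm u * l1norm v <= 2 * Rabs (det2 u v).
Proof.
  intro Huv.
  assert (Hlagrange : norm2 u * norm2 v = det2 u v * det2 u v + dot u v * dot u v)
    by (unfold norm2, det2, dot; ring).
  rewrite Huv in Hlagrange.
  pose proof (l1norm_sqr_le u); pose proof (l1norm_sqr_le v).
  pose proof (l1norm_ge0 u).
  pose proof (l1norm_ge0 v).
  pose proof (Rsqr_abs (det2 u v)); pose proof (Rabs_pos (det2 u v)); unfold Rsqr in *.
  apply Rsqr_incr_0_var; [unfold Rsqr|nra].
  assert (0 <= l1norm u * l1norm u) by nra.
  assert (0 <= l1norm v * l1norm v) by nra.
  replace (l1norm u * l1norm v * (l1norm u * l1norm v))
    with ((l1norm u * l1norm u) * (l1norm v * l1norm v)) by ring.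
  eapply Rle_trans; [apply Rmult_le_compat; eauto|]; nra.
Qed.

Lemma det2_lin_ratio_near (j1 j2 p q s t u v : R * R) (eta : R) :
  supnorm (psub p j1) <= eta -> supnorm (psub q j2) <= eta ->
  supnorm (psub s j1) <= eta -> supnorm (psub t j2) <= eta ->
  dot u v = 0 -> det2 u v <> 0 ->
  let K := Rmax (supnorm j1) (supnorm j2) in
  Rabs (det2 (lin p q u) (lin s t v) / det2 u v - det2 j1 j2)
    <= 4 * (2 * K * eta + eta * eta).
Proof.
  intros Hp Hq Hs Ht Huv Hdet K.
  assert (HK : 0 <= K) by (eapply Rle_trans; [apply supnorm_ge0 | apply Rmax_l]).
  assert (Heta : 0 <= eta) by (eapply Rle_trans; [apply supnorm_ge0 | exact Hp]).
  assert (Hpq : Rmax (supnorm (psub p j1)) (supnorm (psub q j2)) <= eta) by now apply Rmax_lub.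
  assert (Hst : Rmax (supnorm (psub s j1)) (supnorm (psub t j2)) <= eta) by now apply Rmax_lub.
  pose proof (l1norm_mul_le_det2 u v Huv) as Hl1.
  pose proof (l1norm_ge0 u) as Hu.
  pose proof (l1norm_ge0 v) as Hv.
  assert (Herr : Rabs (det2 (lin p q u) (lin s t v) - det2 (lin j1 j2 u) (lin j1 j2 v))
                 <= 2 * (2 * K * eta + eta * eta) * (l1norm u * l1norm v)).
  { rewrite (lin_split p q j1 j2 u), (lin_split s t j1 j2 v).
    eapply Rle_trans;
      [apply (det2_perturb_le _ _ _ _ (K * l1norm u) (K * l1norm v)
                (eta * l1norm u) (eta * l1norm v)) | right; ring];
      (eapply Rle_trans; [apply supnorm_lin_le | apply Rmult_le_compat_r]); auto; apply Rle_refl. }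
  rewrite det2_lin in Herr.
  replace (det2 (lin p q u) (lin s t v) / det2 u v - det2 j1 j2)
    with ((det2 (lin p q u) (lin s t v) - det2 j1 j2 * det2 u v) / det2 u v)
    by (field; exact Hdet).
  unfold Rdiv; rewrite Rabs_mult, Rabs_inv.
  pose proof (Rabs_pos_lt _ Hdet).
  apply (Rmult_le_reg_r (Rabs (det2 u v))); [assumption|].
  rewrite Rmult_assoc, Rinv_l by lra.
  assert (0 <= 2 * K * eta + eta * eta) by nra.
  nra.
Qed.

Lemma norm2_neq0_of_det2 (w v : R * R) : det2 w v <> 0 -> norm2 v <> 0.
Proof.
  intros Hdet Hv; apply Hdet.
  pose proof (Rle_0_sqr (fst v)); pose proof (Rle_0_sqr (snd v)).
  unfold norm2, dot, Rsqr in *.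
  assert (fst v = 0) by nra; assert (snd v = 0) by nra.
  unfold det2; nra.
Qed.

Section Rejection.

Variables w v : R * R.
Hypothesis Hv : norm2 v <> 0.

Lemma dot_reject : dot (reject w v) v = 0.
Proof. unfold reject, norm2, dot, psub, pscal in *; simpl; field; exact Hv. Qed.

Lemma det2_reject : det2 (reject w v) v = det2 w v.
Proof. unfold reject, det2, psub, pscal; simpl; ring. Qed.

Lemma norm2_reject_le : norm2 (reject w v) <= norm2 w.
Proof.
  assert (Hpos : 0 < norm2 v).
  { pose proof (Rle_0_sqr (fst v)); pose proof (Rle_0_sqr (snd v)).
    unfold norm2, dot, Rsqr in *; lra. }
  assert (Hid : norm2 (reject w v) = norm2 w - dot w v * dot w v / norm2 v)
    by (unfold reject, norm2, dot, psub, pscal in *; simpl; field; exact Hv).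
  rewrite Hid.
  assert (0 <= dot w v * dot w v / norm2 v)
    by (apply Rdiv_le_0_compat; [apply Rle_0_sqr | exact Hpos]).
  lra.
Qed.

End Rejection.

Lemma mirror_sub (a b c : R * R) :
  norm2 (psub c b) <> 0 ->
  psub (mirror a b c) a = pscal 2 (reject (psub b a) (psub c b)).
Proof.
  intro Hv; unfold mirror, reject, norm2, dot, psub, pscal, padd in *; simpl in *.
  f_equal; field; exact Hv.
Qed.

Lemma dot_pscall (k : R) (u v : R * R) : dot (pscal k u) v = k * dot u v.
Proof. unfold dot, pscal; simpl; ring. Qed.

Lemma det2_pscall (k : R) (u v : R * R) : det2 (pscal k u) v = k * det2 u v.
Proof. unfold det2, pscal; simpl; ring. Qed.

Lemma norm2_pscal (k : R) (u : R * R) : norm2 (pscal k u) = k * k * norm2 u.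
Proof. unfold norm2, dot, pscal; simpl; ring. Qed.

Section Mirror.

Variables a b c : R * R.
Hypothesis Hnd : nondegenerate a b c.

Let Hbc : norm2 (psub c b) <> 0 := norm2_neq0_of_det2 _ _ Hnd.

Lemma dot_mirror_sub : dot (psub (mirror a b c) a) (psub c b) = 0.
Proof. rewrite (mirror_sub a b c Hbc), dot_pscall, dot_reject by exact Hbc; ring. Qed.

Lemma det2_mirror_sub :
  det2 (psub (mirror a b c) a) (psub c b) = 2 * det2 (psub b a) (psub c b).
Proof. now rewrite (mirror_sub a b c Hbc), det2_pscall, det2_reject. Qed.

Lemma norm2_mirror_sub_le : norm2 (psub (mirror a b c) a) <= 4 * norm2 (psub b a).
Proof.
  rewrite (mirror_sub a b c Hbc), norm2_pscal.
  pose proof (norm2_reject_le (psub b a) _ Hbc); lra.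
Qed.

Lemma mirror_ratio_eq (f : R * R -> R * R) :
  mirror_ratio f a b c =
  det2 (psub (f (mirror a b c)) (f a)) (psub (f c) (f b))
  / det2 (psub (mirror a b c) a) (psub c b).
Proof. unfold mirror_ratio; now rewrite det2_mirror_sub. Qed.

(* [|m - a| <= 2 |b - a|], so the mirror vertex stays close to [x] whenever [a] and [b] are. *)
Lemma mirror_ball (x : R * R) (d : R) :
  ball x d a -> ball x d b -> ball x (d + 6 * d) (mirror a b c).
Proof.
  intros Ha Hb.
  assert (Hd : 0 <= d)
    by (apply ball_supnorm in Ha; pose proof (supnorm_ge0 (psub a x)); lra).
  assert (Hab : supnorm (psub b a) < d + d)
    by (apply ball_supnorm, (ball_triangle _ x); [apply ball_sym|]; assumption).
  apply (ball_triangle _ a); [exact Ha|]; apply ball_supnorm.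
  pose proof (norm2_mirror_sub_le).
  destruct (supnorm_sqr_bounds (psub (mirror a b c) a)).
  destruct (supnorm_sqr_bounds (psub b a)).
  pose proof (supnorm_ge0 (psub b a)); pose proof (supnorm_ge0 (psub (mirror a b c) a)).
  nra.
Qed.

End Mirror.

Lemma MVT_ex_derive (g : R -> R) (s t : R) :
  (forall y, Rmin s t <= y <= Rmax s t -> ex_derive g y) ->
  exists xi, Rmin s t <= xi <= Rmax s t /\ g t - g s = Derive g xi * (t - s).
Proof.
  intro Hg.
  apply MVT_gen.
  - intros y Hy; apply Derive_correct, Hg; lra.
  - intros y Hy; apply continuity_pt_filterlim.
    apply (ex_derive_continuous (K := R_AbsRing) (V := R_NormedModule)), Hg, Hy.
Qed.

Lemma ball_R_between (x0 s t y r : R) :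
  ball x0 r s -> ball x0 r t -> Rmin s t <= y <= Rmax s t -> ball x0 r y.
Proof.
  change (Rabs (s - x0) < r -> Rabs (t - x0) < r -> Rmin s t <= y <= Rmax s t ->
          Rabs (y - x0) < r).
  intros Hs Ht Hy; apply Rabs_def2 in Hs, Ht; apply Rabs_def1;
    unfold Rmin, Rmax in Hy; destruct Rle_dec; lra.
Qed.

Section Increment.

Variables (Omega : R * R -> Prop) (psi : R * R -> R) (x : R * R).
Hypotheses (HOmega : open Omega) (Hpsi : has_partials_on Omega psi) (Hx : Omega x)
  (Hd1 : continuous (Defs.d1 psi) x) (Hd2 : continuous (Defs.d2 psi) x).

(* Move from [b] to [c] first horizontally, then vertically, applying the mean value
   theorem on each leg; continuity of the partials makes both slopes close to [grad psi x]. *)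
Lemma increment_near_grad (eta : R) : 0 < eta ->
  exists r, 0 < r /\ forall b c, ball x r b -> ball x r c ->
    exists p, supnorm (psub p (grad psi x)) <= eta /\ psi c - psi b = dot p (psub c b).
Proof.
  intro Heta.
  assert (Hnear : locally x (fun y => Omega y /\ ball (Defs.d1 psi x) eta (Defs.d1 psi y)
                                         /\ ball (Defs.d2 psi x) eta (Defs.d2 psi y))).
  { repeat apply filter_and; [now apply HOmega| |];
      [apply Hd1 | apply Hd2]; exact (locally_ball _ (mkposreal _ Heta)). }
  destruct Hnear as [r Hr].
  exists r; split; [apply cond_pos|].
  intros [b1 b2] [c1 c2] [Hb1 Hb2] [Hc1 Hc2]; simpl in *.
  destruct (MVT_ex_derive (fun t => psi (t, c2)) b1 c1) as [xi [Hxi E1]].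
  { intros y Hy; apply (Hpsi (y, c2)), Hr; split; [|exact Hc2].
    exact (ball_R_between _ _ _ _ _ Hb1 Hc1 Hy). }
  destruct (MVT_ex_derive (fun t => psi (b1, t)) b2 c2) as [zeta [Hzeta E2]].
  { intros y Hy; apply (Hpsi (b1, y)), Hr; split; [exact Hb1|].
    exact (ball_R_between _ _ _ _ _ Hb2 Hc2 Hy). }
  exists (Defs.d1 psi (xi, c2), Defs.d2 psi (b1, zeta)); split.
  - assert (Hxi' : ball x r (xi, c2))
      by (split; [exact (ball_R_between _ _ _ _ _ Hb1 Hc1 Hxi) | exact Hc2]).
    assert (Hzeta' : ball x r (b1, zeta))
      by (split; [exact Hb1 | exact (ball_R_between _ _ _ _ _ Hb2 Hc2 Hzeta)]).
    apply supnorm_le; apply Rlt_le; [apply (Hr _ Hxi') | apply (Hr _ Hzeta')].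
  - unfold dot, psub; simpl.
    unfold Defs.d1, Defs.d2; simpl; lra.
Qed.

End Increment.

Lemma map_increment_near_lin (Omega : R * R -> Prop) (f : R * R -> R * R) (x : R * R) :
  open Omega -> C1_on Omega (fun y => fst (f y)) -> C1_on Omega (fun y => snd (f y)) ->
  Omega x -> forall eta, 0 < eta ->
  exists r, 0 < r /\ forall b c, ball x r b -> ball x r c ->
    exists p q, supnorm (psub p (grad (fun y => fst (f y)) x)) <= eta /\
                supnorm (psub q (grad (fun y => snd (f y)) x)) <= eta /\
                psub (f c) (f b) = lin p q (psub c b).
Proof.
  intros HOmega [P1 C1] [P2 C2] Hx eta Heta.
  destruct (C1 x Hx) as (_ & C11 & C12); destruct (C2 x Hx) as (_ & C21 & C22).
  destruct (increment_near_grad _ _ _ HOmega P1 Hx C11 C12 _ Heta) as (r1 & Hr1 & I1).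
  destruct (increment_near_grad _ _ _ HOmega P2 Hx C21 C22 _ Heta) as (r2 & Hr2 & I2).
  exists (Rmin r1 r2); split; [now apply Rmin_pos|].
  intros b c Hb Hc.
  destruct (I1 b c) as (p & Hp & E1); try (eapply ball_le; [apply Rmin_l | eassumption]).
  destruct (I2 b c) as (q & Hq & E2); try (eapply ball_le; [apply Rmin_r | eassumption]).
  exists p, q; repeat split; try assumption.
  unfold psub at 1, lin; now rewrite <- E1, <- E2.
Qed.

Lemma error_bound_small (K eps : R) : 0 <= K -> 0 < eps ->
  exists eta, 0 < eta /\ 4 * (2 * K * eta + eta * eta) < eps.
Proof.
  intros HK Heps.
  set (eta := Rmin 1 (eps / (8 * (2 * K + 1)))).
  assert (Heta : 0 < eta) by (apply Rmin_pos; [lra | apply Rdiv_lt_0_compat; lra]).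
  assert (Heta1 : eta <= 1) by apply Rmin_l.
  assert (Heta2 : eta * (8 * (2 * K + 1)) <= eps).
  { apply (Rmult_le_reg_r (/ (8 * (2 * K + 1)))); [apply Rinv_0_lt_compat; lra|].
    rewrite Rmult_assoc, Rinv_r, Rmult_1_r by lra; apply Rmin_r. }
  exists eta; split; [exact Heta | nra].
Qed.

Theorem theorem1 (Omega : R * R -> Prop) (f : R * R -> R * R) :
  open Omega -> smooth_map Omega f ->
  forall x : R * R, Omega x ->
  forall eps : R, 0 < eps ->
  exists delta : R, 0 < delta /\
    forall a b c : R * R,
      pdist a x < delta -> pdist b x < delta -> pdist c x < delta ->
      nondegenerate a b c -> balanced a b c ->
      Omega a -> Omega b -> Omega c -> Omega (mirror a b c) ->
      Rabs (mirror_ratio f a b c - jac_det f x) < eps.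
Proof.
  intros HOmega [[[H1 _] _] [[H2 _] _]] x Hx eps Heps.
  set (j1 := grad (fun y => fst (f y)) x); set (j2 := grad (fun y => snd (f y)) x).
  set (K := Rmax (supnorm j1) (supnorm j2)).
  assert (HK : 0 <= K) by (eapply Rle_trans; [apply supnorm_ge0 | apply Rmax_l]).
  destruct (error_bound_small K eps HK Heps) as (eta & Heta & Hsmall).
  destruct (map_increment_near_lin Omega f x HOmega H1 H2 Hx eta Heta) as (r & Hr & Hinc).
  exists (r / 7); split; [lra|].
  intros a b c Ha Hb Hc Hnd _ _ _ _ _.
  apply pdist_ball in Ha, Hb, Hc.
  assert (Hm : ball x r (mirror a b c))
    by (replace r with (r / 7 + 6 * (r / 7)) by field; now apply mirror_ball).
  assert (Hsub : forall y, ball x (r / 7) y -> ball x r y) by (intro; apply ball_le; lra).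
  destruct (Hinc a (mirror a b c)) as (p & q & Hp & Hq & Ema); auto.
  destruct (Hinc b c) as (s & t & Hs & Ht & Ecb); auto.
  change (jac_det f x) with (det2 j1 j2).
  rewrite mirror_ratio_eq, Ema, Ecb by exact Hnd.
  eapply Rle_lt_trans; [|exact Hsmall].
  apply det2_lin_ratio_near; auto using dot_mirror_sub.
  rewrite det2_mirror_sub by exact Hnd; unfold nondegenerate in Hnd; lra.
Qed.
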